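(* Fix a constant $\gamma > 0$. In the real-time oblivious erasure correction protocol on $k$ message symbols, in order for the receiver to recover a $(1-\gamma)$ fraction of the message symbols, the feedback channel needs to successfully transmit at most $O(1)$ bits.
   Context: Real-time oblivious erasure correction protocol on $k$ message symbols $x_1,\dots,x_k \in \mathbb{F}_2$: a sender transmits an unbounded stream of encoding symbols over a binary erasure channel with unknown erasure rate. The sender maintains a counter $r$ (initially $0$), the number of symbols the receiver has decoded as reported via feedback. Each encoding symbol uses degree $d(r) = \lfloor (k+1)/(k-r) \rfloor$ for $0 \le r \le k-2$ (and $d(k-1)=k$): the sender picks $d=d(r)$ indices uniformly at random from $\{1,\dots,k\}$ and sends the XOR of the corresponding symbols together with the indices and $d$. The receiver processes each received encoding symbol immediately: if exactly one of its indices is unknown it recovers that symbol by XORing with the known symbols and increments its count $r$; otherwise it discards the symbol. The receiver sends a one-bit feedback message (acknowledgement) to the sender exactly when the value of $\lfloor (k+1)/(k-r)\rfloor$ changes (i.e., the current degree differs from it), and the sender then updates its counter. *)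

From mathcomp Require Import all_boot.
From Stdlib Require Import Reals.

Definition sender_degree (k r : nat) : nat :=
  if r == k.-1 then k else (k.+1 %/ (k - r))%N.

(* The receiver, having just incremented its count to r (1 <= r <= k-1),
   sends a one-bit acknowledgement exactly when floor((k+1)/(k-r)) differs
   from the degree currently used by the sender, which (all earlier
   acknowledgements having been delivered) is d(r-1). *)
Definition feedback_sent (k r : nat) : bool :=
  [&& (1 <= r)%N, (r <= k.-1)%N & (k.+1 %/ (k - r))%N != sender_degree k r.-1].

(* Number of feedback bits transmitted while the receiver is still short of
   a (1-gamma) fraction of the k message symbols, i.e. on the increments
   r-1 -> r with r-1 < (1-gamma) k (including the increment reaching the goal). *)
Definition feedback_bits_to_fraction (gamma : R) (k : nat) : nat :=
  count (fun r => feedback_sent k r &&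
                  (if Rlt_dec (INR r.-1) ((1 - gamma) * INR k)%R then true else false))
        (iota 1 k).

From mathcomp Require Import all_boot zify.
From Stdlib Require Import Reals Lra.

(* The receiver's degree floor((k+1)/(k-r)) is nondecreasing in r, and every
   acknowledgement marks a strict increase of it.  While fewer than
   (1-gamma) k symbols are decoded, k - r exceeds roughly gamma k, so this
   degree stays below a constant 2N with N gamma > 1; a nondecreasing
   integer sequence bounded by 2N can increase at most 2N times. *)

Lemma count_bounded_jumps (h : nat -> nat) (B n : nat) :
  (forall i, i < n -> h i <= h i.+1) ->
  count (fun i => (h i < h i.+1) && (h i.+1 <= B)) (iota 0 n) <= minn B (h n).
Proof.
elim: n => [|n IHn] h_mono //.
rewrite -[in iota _ n.+1]addn1 iotaD count_cat /= addn0 add0n.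
have IH := IHn (fun i lt_in => h_mono i (ltnW lt_in)).
have h_step := h_mono n (ltnSn n).
by case: (ltnP (h n) (h n.+1)) => ?; case: (leqP (h n.+1) B) => ? /=; lia.
Qed.

Definition floor_degree (k r : nat) : nat := k.+1 %/ (k - r).

Lemma floor_degree_mono (k i : nat) :
  i.+1 < k -> floor_degree k i <= floor_degree k i.+1.
Proof. by move=> lt_ik; apply: leq_div2l; lia. Qed.

Lemma feedback_sentE (k i : nat) :
  feedback_sent k i.+1 = (i.+2 <= k) && (floor_degree k i != floor_degree k i.+1).
Proof.
rewrite /feedback_sent /sender_degree /floor_degree /=.
have [le_ik | gt_ik] := leqP i.+2 k; last by have -> : (i < k.-1) = false by lia.
have -> : i < k.-1 by lia.
have -> : (i == k.-1) = false by lia.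
by rewrite eq_sym.
Qed.

Lemma floor_degree_le (k i N : nat) :
  k < N * (k - i) -> i.+2 <= k -> floor_degree k i.+1 <= N.*2.
Proof.
move=> lt_kN le_ik; rewrite /floor_degree -ltnS ltn_divLR; last lia.
have : N * (k - i) <= N * (2 * (k - i.+1)) by apply: leq_mul => //; lia.
lia.
Qed.

Lemma ltn_mul_remaining (gamma : R) (N k i : nat) :
  (INR N * gamma > 1)%R -> (INR i < (1 - gamma) * INR k)%R -> k < N * (k - i).
Proof.
move=> gt_Ngamma lt_i.
have i_ge0 := pos_INR i; have k_ge0 := pos_INR k; have N_ge0 := pos_INR N.
have gamma_pos : (0 < gamma)%R by nra.
have lt_ik : i < k by apply/ltP/INR_lt; nra.
apply/ltP/INR_lt; rewrite mult_INR minus_INR; last by apply/leP; lia.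
have k_pos : (0 < INR k)%R by apply/lt_0_INR/ltP; lia.
have gap : (INR N * (INR k - INR i) >= INR N * (gamma * INR k))%R.
  by apply/Rle_ge/Rmult_le_compat_l; lra.
nra.
Qed.

Theorem lemma4 (gamma : R) (Hgamma : (0 < gamma)%R) :
  exists C : nat, forall k : nat, (feedback_bits_to_fraction gamma k <= C)%N.
Proof.
have [N gt_Ngamma] := INR_archimed gamma 1 Hgamma.
exists N.*2 => k; rewrite /feedback_bits_to_fraction (iotaDl 1 0 k) count_map.
pose jump i := (floor_degree k i < floor_degree k i.+1) && (floor_degree k i.+1 <= N.*2).
apply: leq_trans (_ : count (predI jump (fun i => i < k.-1)) (iota 0 k) <= _).
  apply: sub_count => i /=; rewrite add1n feedback_sentE /=.
  case/andP=> /andP [le_ik neq_deg]; rewrite add0n; case: Rlt_dec => //= lt_i _.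
  have lt_ik : i < k.-1 by lia.
  rewrite /jump lt_ik ltn_neqAle neq_deg floor_degree_mono //= andbT.
  by apply: floor_degree_le => //; apply: ltn_mul_remaining lt_i.
rewrite -count_filter (filter_iota_ltn 0 (leq_pred k)).
apply: leq_trans (geq_minl _ (floor_degree k k.-1)).
apply: count_bounded_jumps => i lt_ik.
by apply: floor_degree_mono; lia.
Qed.
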